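(* Let $f:\mathbb{R}\to\mathbb{C}$ be Lebesgue measurable and suppose there exist constants $a,c\in\mathbb{C}$ and $b\in\mathbb{R}$ such that $f(x)=ce^{ax}$ for almost every $x>b$, or alternatively $f(x)=ce^{ax}$ for almost every $x<b$. Then $\mathcal G(f,\mathbb{R}^2)$ is linearly independent, unless $f(x)=ce^{ax}$ for almost every $x\in\mathbb{R}$.
   Context: For $\alpha,\beta\in\mathbb{R}$, $M_\alpha T_\beta f(x)=e^{2\pi i \alpha x}f(x-\beta)$, and $\mathcal G(f,\mathbb{R}^2)=\{M_\alpha T_\beta f:\alpha,\beta\in\mathbb{R}\}$. Measurable functions equal a.e. are identified; $\mathcal G(f,\mathbb{R}^2)$ is linearly independent if every finite linear combination $\sum c_{(\alpha,\beta)}M_\alpha T_\beta f$ over distinct pairs $(\alpha,\beta)$ with coefficients not all zero is not zero almost everywhere. *)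

From HB Require Import structures.
From mathcomp Require Import all_boot all_order all_algebra.
From mathcomp Require Import all_classical all_reals all_analysis.
From mathcomp Require Import complex.

Set Implicit Arguments.
Unset Strict Implicit.
Unset Printing Implicit Defensive.

Import Order.TTheory GRing.Theory Num.Theory.
Import numFieldNormedType.Exports.

Local Open Scope classical_set_scope.
Local Open Scope ring_scope.

(* The measurable space of Lebesgue-measurable subsets of R
   (the Caratheodory/completed sigma-algebra of the Lebesgue measure). *)
Notation lebesgueR R :=
  (caratheodory_type (R:=R)
     (T:=lebesgue_stieltjes_measure_ocitv_type__canonical__measurable_structure_SemiRingOfSets R)
     (wlength (R:=R) idfun)^*%mu).

Definition expC {R : realType} (z : R[i]) : R[i] :=
  Complex (expR (complex.Re z) * cos (complex.Im z))
          (expR (complex.Re z) * sin (complex.Im z)).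

Definition RtoC {R : realType} (x : R) : R[i] := Complex x 0.

Definition cLebesgue_measurable {R : realType} (f : R -> R[i]) : Prop :=
  measurable_fun (T := lebesgueR R) (U := R) setT (fun x => complex.Re (f x)) /\
  measurable_fun (T := lebesgueR R) (U := R) setT (fun x => complex.Im (f x)).

Definition MT {R : realType} (al be : R) (f : R -> R[i]) (x : R) : R[i] :=
  expC (Complex 0 (2 * pi * al * x)) * f (x - be).

(* Linear independence of G(f, R^2) = { M_al T_be f : al, be in R },
   functions equal a.e. being identified: every finite linear combination over
   distinct pairs (al, be), with coefficients not all zero, is not a.e. zero. *)
Definition gabor_lin_indep {R : realType} (f : R -> R[i]) : Prop :=
  forall (s : seq (R * R)) (c : R * R -> R[i]),
    uniq s -> has (fun p => c p != 0) s ->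
    ~ (\forall x \ae (@lebesgue_measure R),
          \sum_(p <- s) c p * MT p.1 p.2 f x = 0).

(* Write e(x) = c e^{ax}. Time-frequency shifts of e are again complex
   exponentials, and a finite exponential sum with distinct frequencies that
   vanishes on a set of positive measure has zero coefficients: such a set has
   a point z that is a limit of zeros from the right, so by Rolle every
   derivative of the sum vanishes at z, and a Vandermonde argument follows.
   Hence if a Gabor combination of f vanishes a.e., then, since f = e a.e. far
   to the right, the same combination of e vanishes identically, and so does
   the combination of h = f - e. Now h vanishes a.e. on a right half-line but
   not a.e. Let be0 be the largest translation with a nonzero coefficient and
   D the gap below be0 among the translations. Stepping left by D we find u
   with h = 0 a.e. beyond u + D but not beyond u; for x - be0 > u every term
   with a smaller translation vanishes, so a trigonometric polynomial in x
   times h(x - be0) vanishes a.e., forcing that polynomial, and with it the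
   coefficient at be0, to vanish. The left half-line case follows by the
   reflection x -> -x. *)

From mathcomp Require Import all_boot all_order all_algebra.
From mathcomp Require Import all_classical all_reals all_analysis.
From mathcomp Require Import complex ring lra measurable_realfun.

Set Implicit Arguments.
Unset Strict Implicit.
Unset Printing Implicit Defensive.

Import Order.TTheory GRing.Theory Num.Theory.
Import numFieldNormedType.Exports.

Local Open Scope classical_set_scope.
Local Open Scope ring_scope.

Lemma filter_all_in_seq (T : Type) (F : set_system T) (FF : Filter F)
    (I : eqType) (s : seq I) (P : I -> T -> Prop) :
  (forall i, i \in s -> \forall x \near F, P i x) ->
  \forall x \near F, forall i, i \in s -> P i x.
Proof.
elim: s => [_|j s IH Ps]; first exact: nearW.
apply: filterS2 (Ps j (mem_head _ _)) (IH _) => [x Pj Ps' i|i si].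
  by rewrite in_cons => /predU1P[->|]; [exact: Pj|exact: Ps'].
by apply: Ps; rewrite in_cons si orbT.
Qed.

Lemma negligible_ae_subset (d : measure_display) (T : ringOfSetsType d)
    (R : realFieldType) (mu : {measure set T -> \bar R}) (S Z : set T) :
  (\forall x \ae mu, S x -> Z x) -> mu.-negligible Z -> mu.-negligible S.
Proof.
move=> SZ Z0; apply: negligibleS (negligibleU Z0 SZ) => x Sx /=.
by have [Zx|nZx] := pselect (Z x); [left|right => /(_ Sx)].
Qed.

Lemma vandermonde_coef0 (F : idomainType) (s : seq F) (V : F -> F) (l0 : F) :
  uniq s -> l0 \in s -> (forall j, \sum_(l <- s) V l * l ^+ j = 0) -> V l0 = 0.
Proof.
move=> us l0s V0.
have Vp (p : {poly F}) : \sum_(l <- s) V l * p.[l] = 0.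
  under eq_bigr do rewrite horner_coef big_distrr /=.
  rewrite exchange_big /= big1 // => j _.
  under eq_bigr do rewrite mulrCA.
  by rewrite -big_distrr /= V0 mulr0.
pose p := \prod_(m <- rem l0 s) ('X - m%:P).
have pl0 : p.[l0] != 0.
  rewrite horner_prod prodf_seq_neq0; apply/allP => m ml0.
  by rewrite hornerXsubC subr_eq0; apply: contraTneq ml0 => <-; rewrite mem_rem_uniqF.
have := Vp p; rewrite (big_rem l0) //= big_seq big1 ?addr0 => [/eqP|l ls].
  by rewrite mulf_eq0 (negbTE pl0) orbF => /eqP.
by rewrite /p horner_prod (big_rem l) //= hornerXsubC subrr mul0r mulr0.
Qed.

Section SeqExtremum.
Variables (R : realDomainType) (T : eqType).
Implicit Types (s : seq T) (g : T -> R).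

Lemma exists_max_in_seq s (P : pred T) g : has P s ->
  exists p, [/\ p \in s, P p & forall q, q \in s -> P q -> g q <= g p].
Proof.
elim: s => //= x s IH; have [/IH[p [ps Pp pmax]] _|nPs] := boolP (has P s).
  have [/andP[Px gpx]|xnP] := boolP (P x && (g p < g x)).
    exists x; split; [exact: mem_head|by []|move=> q].
    by rewrite in_cons => /predU1P[->//|qs /(pmax q qs)/le_trans]; apply; apply: ltW.
  exists p; split; [by rewrite in_cons ps orbT|by []|move=> q].
  rewrite in_cons => /predU1P[->|]; last exact: pmax.
  by move: xnP; rewrite negb_and -leNgt => /orP[/negbTE->|].
rewrite orbF => Px; exists x; split; [exact: mem_head|by []|move=> q].
rewrite in_cons => /predU1P[->//|qs Pq]; case/negP: nPs; apply/hasP; by exists q.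
Qed.

Lemma exists_gap s g (t : R) :
  exists2 D, 0 < D & forall q, q \in s -> g q < t -> g q <= t - D.
Proof.
elim: s => [|x s [D D0 gapD]]; first by exists 1.
have [gx|tgx] := ltP (g x) t; last first.
  exists D => // q; rewrite in_cons => /predU1P[->|]; last exact: gapD.
  by rewrite ltNge tgx.
exists (Num.min D (t - g x)); first by rewrite lt_min D0 subr_gt0.
move=> q; rewrite in_cons => /predU1P[-> _|qs gq].
  by rewrite lerBrDr -lerBrDl ge_min lexx orbT.
by apply: le_trans (gapD q qs gq) _; rewrite lerB // ge_min lexx.
Qed.

End SeqExtremum.

Section ComplexExponential.
Variable R : realType.

Lemma ReD (z w : R[i]) : complex.Re (z + w) = complex.Re z + complex.Re w.
Proof. by case: z w => ? ? []. Qed.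

Lemma RtoCN (x : R) : RtoC (- x) = - RtoC x.
Proof. by apply/eqP; rewrite eq_complex /= oppr0 !eqxx. Qed.

Lemma expCD (z w : R[i]) : expC (z + w) = expC z * expC w.
Proof.
case: z w => u v [u' v']; rewrite /expC /= expRD cosD sinD.
by congr Complex; ring.
Qed.

Lemma expC_neq0 (z : R[i]) : expC z != 0.
Proof.
case: z => u v; apply/eqP; rewrite /expC => -[ec es].
have : expR u ^+ 2 * (cos v ^+ 2 + sin v ^+ 2) = 0.
  by rewrite mulrDr -!exprMn ec es expr0n addr0.
by rewrite cos2Dsin2 mulr1 => /eqP; rewrite expf_eq0 /= gt_eqF // expR_gt0.
Qed.

Lemma is_derive_scale (g : R -> R) (u x dg : R) :
  is_derive (u * x) 1 g dg -> is_derive x 1 (fun y => g (u * y)) (dg * u).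
Proof. by move=> hg; apply: is_derive1_comp; apply: is_derive_eq; exact: mulr1. Qed.

Lemma is_derive_Re_expC (C l : R[i]) (x : R) :
  is_derive x 1 (fun y => complex.Re (C * expC (l * RtoC y)))
    (complex.Re (C * l * expC (l * RtoC x))).
Proof.
case: C l => [p q] [u v].
pose E y := expR (u * y); pose Co y := cos (v * y); pose Si y := sin (v * y).
have -> : (fun y => complex.Re (Complex p q * expC (Complex u v * RtoC y))) =
    p \*: (E * Co) - q \*: (E * Si).
  by apply/funext => y; rewrite /expC /RtoC /= !mulr0 subr0 add0r.
have hE := is_derive_scale (is_derive_expR (u * x)).
have hC := is_derive_scale (is_derive_cos (v * x)).
have hS := is_derive_scale (is_derive_sin (v * x)).
apply: is_derive_eq; rewrite /expC /RtoC /= !mulr0 subr0 add0r.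
by rewrite /E /Co /Si /GRing.scale /=; ring.
Qed.

End ComplexExponential.

(* The library's generic [Filter] hint for [almost_everywhere] does not fire
   on [lebesgue_measure]. *)
#[local] Instance ae_lebesgue_filter (R : realType) :
  Filter (almost_everywhere (@lebesgue_measure R)) := ae_filter_ringOfSetsType _.

Section LebesgueNegligible.
Variable R : realType.
Local Notation mu := (@lebesgue_measure R).

Lemma ae_shift (t : R) (P : R -> Prop) :
  (\forall x \ae mu, P x) -> \forall x \ae mu, P (x + t).
Proof.
move=> [A [mA A0 NA]].
have mf : measurable_fun [set: measurableTypeR R] (fun x : R => x + t).
  exact: measurable_funD (@measurable_id _ _ setT) (measurable_cst t).
exists ((fun x : R => x + t) @^-1` A); split; last by move=> x /= /NA.
  by rewrite -[X in measurable X]setTI; exact: mf.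
have -> : mu ((fun x : R => x + t) @^-1` A) =
    pushforward mu (fun x : R => x + t : measurableTypeR R) A by [].
rewrite -A0; apply/esym/lebesgue_measure_unique => //= _ [[x y]] _ <-.
rewrite /pushforward.
have -> : (fun z : R => z + t) @^-1` `]x, y]%classic = `]x - t, y - t]%classic.
  by apply/seteqP; split => z /=; rewrite !in_itv /= ltrBlDr lerBrDr.
rewrite /= !lebesgue_measure_itv /= !lte_fin ltrD2r.
by case: ifP => // _; rewrite -!EFinD; congr (_%:E); ring.
Qed.

Lemma ae_reflect (P : R -> Prop) :
  (\forall x \ae mu, P x) -> \forall x \ae mu, P (- x).
Proof.
move=> [A [mA A0 NA]].
exists ((-%R : R -> measurableTypeR R) @^-1` A); split; last by move=> x /= /NA.
- have mN : measurable_fun [set: measurableTypeR R] (-%R : R -> R).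
    exact: measurable_funN (@measurable_id _ _ setT).
  by rewrite -[X in measurable X]setTI; exact: mN.
- by have := lebesgue_measureN mA; rewrite A0.
Qed.

Lemma not_negligible_gt (t : R) : ~ mu.-negligible [set x | t < x].
Proof.
move=> gt0; have : mu.-negligible `]t, t + 1[%classic.
  by apply: negligibleS gt0 => x /=; rewrite in_itv /= => /andP[].
move/negligibleP => /(_ (measurable_itv _)) /=.
rewrite lebesgue_measure_itv /= lte_fin ltrDl ltr01 => -[] /eqP.
by rewrite addrAC subrr add0r oner_eq0.
Qed.

Lemma right_isolated_negligible (Z : set R) :
  (forall z, Z z -> exists2 e, 0 < e & forall y, z < y < z + e -> ~ Z y) ->
  mu.-negligible Z.
Proof.
(* A rational in the gap to the right of each point injects [Z] into [rat]. *)
move=> isoZ.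
have /choice[q qP] : forall z, exists r : rat, Z z ->
    z < ratr r /\ forall y, z < y <= ratr r -> ~ Z y.
  move=> z; have [Zz|nZz] := pselect (Z z); last by exists 0%Q.
  have [e e0 eZ] := isoZ z Zz.
  have ze : z < z + e by rewrite ltrDl.
  have [r] := rat_in_itvoo ze.
  rewrite in_itv /= => /andP[zr re]; exists r => _; split => // y /andP[zy yr].
  by apply: eZ; rewrite zy (le_lt_trans yr re).
have cZ : countable Z.
  apply/countable_injP; exists (fun z => pickle (q z)) => z1 z2.
  rewrite !inE => Z1 Z2 /(pcan_inj pickleK) q12.
  have [[z1q Z1q] [z2q Z2q]] := (qP z1 Z1, qP z2 Z2).
  case: (ltgtP z1 z2) => // [lt12|lt21].
  - by case: (Z1q z2 _ Z2); rewrite lt12 q12 ltW.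
  - by case: (Z2q z1 _ Z1); rewrite lt21 -q12 ltW.
apply/negligibleP; last exact: countable_lebesgue_measure0.
by apply: countable_measurable => // t; exact: measurable_set1.
Qed.

Lemma ae_halfline_step (P : R -> Prop) (b D : R) : 0 < D ->
  (\forall y \ae mu, b < y -> P y) -> ~ (\forall y \ae mu, P y) ->
  exists2 u, (\forall y \ae mu, u + D < y -> P y) &
             ~ (\forall y \ae mu, u < y -> P y).
Proof.
move=> D0 Pb nP; apply: contrapT => noStep.
have step u : (\forall y \ae mu, u + D < y -> P y) -> \forall y \ae mu, u < y -> P y.
  by move=> PuD; apply: contrapT => nPu; apply: noStep; exists u.
have Pn n : \forall y \ae mu, b - n%:R * D < y -> P y.
  elim: n => [|n IH]; first by move: Pb; apply: filterS => y; rewrite mul0r subr0.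
  by apply: step; rewrite -natr1 mulrDl mul1r opprD addrA subrK.
apply: nP; move: (ae_foralln Pn); apply: filterS => y Py.
have [n ltn] : exists n : nat, (b - y) / D < n%:R.
  by exists (Num.truncn ((b - y) / D)).+1; rewrite truncnS_gt.
by apply: (Py n); rewrite ltrBlDr -ltrBlDl -ltr_pdivrMr.
Qed.

End LebesgueNegligible.

Section ExponentialSums.
Variable R : realType.
Local Notation mu := (@lebesgue_measure R).

Definition right_cluster (A : set R) (z : R) :=
  forall e, 0 < e -> exists2 y, z < y < z + e & A y.

Lemma right_cluster_derive (g g' : R -> R) (z : R) :
  (forall x : R, is_derive x 1 g (g' x)) ->
  right_cluster [set y | g y = 0] z -> right_cluster [set y | g' y = 0] z.
Proof.
move=> dg gz e e0.
have [y1 /andP[zy1 y1e] g1] := gz e e0.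
have y1z : 0 < y1 - z by rewrite subr_gt0.
have [y2 /andP[zy2 y2y1] g2] := gz _ y1z.
rewrite addrC subrK in y2y1.
case: (@Rolle R g y2 y1 y2y1 (fun x _ => @ex_derive _ _ _ _ _ _ _ (dg x))).
- by apply: derivable_within_continuous => x _; exact: @ex_derive _ _ _ _ _ _ _ (dg x).
- by rewrite g1 g2.
move=> y; rewrite in_itv /= => /andP[y2y yy1] dgy; exists y.
  by rewrite (lt_trans zy2 y2y) (lt_trans yy1 y1e).
by rewrite /= -(@derive_val _ _ _ _ _ _ _ (dg y)) (@derive_val _ _ _ _ _ _ _ dgy).
Qed.

Lemma right_cluster_continuous_zero (g : R -> R) (z : R) :
  {for z, continuous g} -> right_cluster [set y | g y = 0] z -> g z = 0.
Proof.
move=> cg gz; apply: contrapT => /eqP gz0.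
move/cvgrPdist_lt: cg => /(_ `|g z|); rewrite normr_gt0 gz0 => /(_ isT).
case/nbhs_normP => d d0 near_g.
have [y /andP[zy yd] /= gy] := gz d d0.
suff : `|g z - g y| < `|g z| by rewrite gy subr0 ltxx.
apply: near_g.
by rewrite /ball_ /= ler0_norm ?subr_le0 ?ltW // opprB ltrBlDl.
Qed.

Lemma not_negligible_right_cluster (A : set R) :
  ~ mu.-negligible A -> exists2 z, A z & right_cluster A z.
Proof.
move=> nA; apply: contrapT => nclu; apply: nA; apply: right_isolated_negligible.
move=> z Az; apply: contrapT => niso; apply: nclu; exists z => // e e0.
apply: contrapT => ne; apply: niso; exists e => // y yz Ay.
by apply: ne; exists y.
Qed.

Definition exp_sum (s : seq R[i]) (w : R[i] -> R[i]) (x : R) : R[i] :=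
  \sum_(l <- s) w l * expC (l * RtoC x).

Lemma is_derive_Re_exp_sum (s : seq R[i]) (w : R[i] -> R[i]) (x : R) :
  is_derive x 1 (fun y => complex.Re (exp_sum s w y))
    (complex.Re (exp_sum s (fun l => w l * l) x)).
Proof.
rewrite /exp_sum; elim: s => [|l s IH].
  by under eq_fun do rewrite big_nil; rewrite big_nil; exact: is_derive_cst.
under eq_fun do rewrite big_cons ReD.
rewrite big_cons ReD; exact: is_deriveD (is_derive_Re_expC (w l) l x) IH.
Qed.

Lemma mulr_exp_sum (c : R[i]) (s : seq R[i]) (w : R[i] -> R[i]) (x : R) :
  c * exp_sum s w x = exp_sum s (fun l => c * w l) x.
Proof. by rewrite /exp_sum big_distrr; apply: eq_bigr => l _ /=; rewrite mulrA. Qed.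

Lemma exp_sum_coef0 (s : seq R[i]) (w : R[i] -> R[i]) :
  uniq s -> ~ mu.-negligible [set x | exp_sum s w x = 0] ->
  forall l, l \in s -> w l = 0.
Proof.
move=> us /not_negligible_right_cluster[z _ zclu] l ls.
pose g c j y := complex.Re (c * exp_sum s (fun l => w l * l ^+ j) y).
have dg c j (x : R) : is_derive x 1 (g c j) (g c j.+1 x).
  rewrite /g; under eq_fun do rewrite mulr_exp_sum.
  have := is_derive_Re_exp_sum s (fun l => c * (w l * l ^+ j)) x.
  move/is_derive_eq; apply; rewrite mulr_exp_sum /exp_sum.
  by congr complex.Re; apply: eq_bigr => l' _; rewrite exprSr !mulrA.
have gz c j : g c j z = 0.
  apply: right_cluster_continuous_zero.
    exact/differentiable_continuous/derivable1_diffP/(@ex_derive _ _ _ _ _ _ _ (dg c j z)).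
  elim: j => [|j IH]; last exact: right_cluster_derive (dg c j) IH.
  rewrite /g (_ : (fun l' => _) = w); last by apply/funext => l'; rewrite mulr1.
  by move=> e e0; have [y yz wy] := zclu e e0; exists y; rewrite //= wy mulr0.
(* [c = 1] and [c = -i] recover the real and the imaginary part. *)
have sj j : exp_sum s (fun l => w l * l ^+ j) z = 0.
  move: (gz 1 j) (gz (- 'i%C) j); rewrite /g mul1r.
  by case: (exp_sum _ _ _) => u v /= -> /=; rewrite !(mul0r, mulr0, oppr0) => v0; congr Complex; lra.
have : w l * expC (l * RtoC z) = 0.
  apply: (vandermonde_coef0 (V := fun l => w l * expC (l * RtoC z))) us ls _ => j.
  by rewrite -[RHS](sj j); apply: eq_bigr => l' _; rewrite mulrAC.
by move/eqP; rewrite mulf_eq0 (negbTE (expC_neq0 _)) orbF => /eqP.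
Qed.

Lemma exp_sum_group (I : eqType) (s : seq I) (F : I -> R[i]) (lam : I -> R[i]) (x : R) :
  \sum_(i <- s) F i * expC (lam i * RtoC x) =
  exp_sum (undup (map lam s)) (fun l => \sum_(i <- s | lam i == l) F i) x.
Proof.
rewrite /exp_sum; under [RHS]eq_bigr do rewrite big_distrl big_mkcond /=.
rewrite exchange_big /= big_seq [RHS]big_seq; apply: eq_bigr => i si.
rewrite (big_rem (lam i)) ?mem_undup ?map_f //= eqxx big_seq big1 ?addr0 // => l.
by rewrite mem_rem_uniq ?undup_uniq // inE eq_sym => /andP[/negbTE->].
Qed.

Lemma exp_sum_group_coef0 (I : eqType) (s : seq I) (F : I -> R[i]) (lam : I -> R[i]) :
  ~ mu.-negligible [set x | \sum_(i <- s) F i * expC (lam i * RtoC x) = 0] ->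
  forall l, \sum_(i <- s | lam i == l) F i = 0.
Proof.
move=> nZ l; have [ls|nls] := boolP (l \in undup (map lam s)).
  apply: (exp_sum_coef0 (w := fun l => \sum_(i <- s | lam i == l) F i)
            (undup_uniq _) _ ls); apply: contra_not nZ.
  by apply: negligibleS => x /=; rewrite exp_sum_group.
rewrite big_seq_cond big1 // => i /andP[si /eqP li]; move: nls.
by rewrite mem_undup -li map_f.
Qed.

Lemma exp_sum_vanish (I : eqType) (s : seq I) (F : I -> R[i]) (lam : I -> R[i]) :
  ~ mu.-negligible [set x | \sum_(i <- s) F i * expC (lam i * RtoC x) = 0] ->
  forall x, \sum_(i <- s) F i * expC (lam i * RtoC x) = 0.
Proof.
move=> nZ x; rewrite exp_sum_group /exp_sum big1 // => l _.
by rewrite exp_sum_group_coef0 // mul0r.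
Qed.

End ExponentialSums.

Section TimeFrequencyShifts.
Variable R : realType.
Local Notation mu := (@lebesgue_measure R).
Implicit Types (f h : R -> R[i]) (s : seq (R * R)) (k : R * R -> R[i]).

Definition freq (al : R) : R[i] := Complex 0 (2 * pi * al).

Lemma MTE (al be : R) f x : MT al be f x = expC (freq al * RtoC x) * f (x - be).
Proof. by rewrite /MT /freq /RtoC; congr (expC _ * _); congr Complex; ring. Qed.

Lemma MTB (al be : R) f h x : MT al be (f \- h) x = MT al be f x - MT al be h x.
Proof. exact: mulrBr. Qed.

Lemma MT_expC (al be : R) (a c : R[i]) x :
  MT al be (fun y => c * expC (a * RtoC y)) x =
  c * expC (- a * RtoC be) * expC ((a + freq al) * RtoC x).
Proof.
rewrite MTE mulrCA -mulrA -!expCD; congr (_ * expC _).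
by case: a => u v; rewrite /freq /RtoC /=; congr Complex; ring.
Qed.

Lemma freq_inj : injective freq.
Proof.
move=> al al' [] /(mulfI _); apply.
by rewrite mulf_neq0 ?pnatr_eq0 // gt_eqF // pi_gt0.
Qed.

Lemma gabor_sum_expC_vanish f (a c : R[i]) (b : R) s k :
  (\forall x \ae mu, b < x -> f x = c * expC (a * RtoC x)) ->
  (\forall x \ae mu, \sum_(p <- s) k p * MT p.1 p.2 f x = 0) ->
  forall x, \sum_(p <- s) k p * MT p.1 p.2 (fun y => c * expC (a * RtoC y)) x = 0.
Proof.
move=> fe fL; pose M := \sum_(p <- s) `|p.2|.
have leM p : p \in s -> p.2 <= M.
  move=> ps; rewrite /M (big_rem p) //= (le_trans (ler_norm _)) // lerDl.
  exact: sumr_ge0.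
move=> x; under eq_bigr do rewrite MT_expC mulrA; move: x.
apply: exp_sum_vanish; apply: contra_not (@not_negligible_gt R (b + M)).
apply: negligible_ae_subset.
have : \forall x \ae mu, forall p, p \in s ->
    b < x - p.2 -> f (x - p.2) = c * expC (a * RtoC (x - p.2)).
  by apply: filter_all_in_seq => p _; exact: ae_shift fe.
apply: filterS2 fL => x fLx fex /= bMx; rewrite -[RHS]fLx big_seq [RHS]big_seq.
apply: eq_bigr => p ps; rewrite -mulrA -MT_expC /MT fex // ltrBrDr.
by apply: le_lt_trans bMx; rewrite lerD2l leM.
Qed.

Lemma gabor_lin_indep_halfline (h : R -> R[i]) (b : R) :
  (\forall y \ae mu, b < y -> h y = 0) -> ~ (\forall y \ae mu, h y = 0) ->
  gabor_lin_indep h.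
Proof.
move=> hb nh s k us hs hL.
have [p0 [p0s kp0 p0max]] := exists_max_in_seq snd hs.
set be := p0.2 in p0max.
have [D D0 gapD] := exists_gap s snd be.
have [u hu nhu] := ae_halfline_step D0 hb nh.
pose T x := \sum_(q <- [seq q <- s | q.2 == be]) k q * expC (freq q.1 * RtoC x).
(* A term with nonzero coefficient and translation other than [be] has its
   translation at most [be - D], so it vanishes once [x - be > u]. *)
have Th : \forall x \ae mu, u < x - be -> T x * h (x - be) = 0.
  have : \forall x \ae mu, forall q, q \in s -> u + D < x - q.2 -> h (x - q.2) = 0.
    by apply: filter_all_in_seq => q _; exact: ae_shift hu.
  apply: filterS2 hL => x hLx hux ux; rewrite -[RHS]hLx (bigID (fun q => q.2 == be)) /=.
  rewrite [X in _ = _ + X]big_seq_cond [X in _ = _ + X]big1 ?addr0 => [|q /andP[qs qbe]].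
    rewrite /T big_filter big_distrl /=; apply: eq_bigr => q /eqP qbe.
    by rewrite MTE qbe mulrA.
  have [->|kq] := eqVneq (k q) 0; first by rewrite mul0r.
  rewrite /MT hux ?mulr0 //.
  have := gapD q qs; rewrite lt_neqAle qbe p0max // => /(_ isT); lra.
have nT : ~ mu.-negligible [set x | T x = 0].
  apply: contra_not nhu => T0.
  have : \forall x \ae mu, u < x - be -> h (x - be) = 0.
    apply: negligible_ae_subset T0; apply: filterS Th => x Thx /not_implyP[ux /eqP hx].
    by move/eqP: (Thx ux); rewrite mulf_eq0 (negbTE hx) orbF => /eqP.
  by move/(ae_shift be); apply: filterS => y; rewrite addrK.
have := exp_sum_group_coef0 (lam := fun q => freq q.1) nT (freq p0.1).
rewrite big_filter_cond (eq_bigl (pred1 p0)) => [|q].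
  by rewrite -big_filter filter_pred1_uniq // big_seq1; apply/eqP.
by rewrite (inj_eq freq_inj) andbC /be -xpair_eqE -!surjective_pairing.
Qed.

Lemma gabor_lin_indep_right (f : R -> R[i]) (a c : R[i]) (b : R) :
  (\forall x \ae mu, b < x -> f x = c * expC (a * RtoC x)) ->
  ~ (\forall x \ae mu, f x = c * expC (a * RtoC x)) ->
  gabor_lin_indep f.
Proof.
move=> fe nfe s k us hs fL; pose e x := c * expC (a * RtoC x).
have eL := gabor_sum_expC_vanish fe fL.
apply: (gabor_lin_indep_halfline (h := f \- e) (b := b)) us hs _.
- by apply: filterS fe => x fex bx; rewrite /= fex // subrr.
- by apply: contra_not nfe; apply: filterS => x /eqP; rewrite subr_eq0 => /eqP.
- apply: filterS fL => x fLx; under eq_bigr do rewrite MTB mulrBr.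
  by rewrite sumrB fLx eL subrr.
Qed.

Lemma gabor_lin_indep_reflect (f : R -> R[i]) :
  gabor_lin_indep (fun x => f (- x)) -> gabor_lin_indep f.
Proof.
move=> indep s k us hs fL; pose opp2 (p : R * R) := (- p.1, - p.2).
have opp2K : involutive opp2 by move=> [x y]; rewrite /opp2 /= !opprK.
apply: (indep (map opp2 s) (k \o opp2)).
- by rewrite map_inj_uniq //; exact: inv_inj.
- by rewrite has_map; apply: sub_has hs => p; rewrite /= opp2K.
- apply: filterS (ae_reflect fL) => x fLx; rewrite -[RHS]fLx big_map.
  apply: eq_bigr => p _; rewrite /= opp2K /MT /= opprB addrC.
  by congr (_ * (expC _ * _)); congr Complex; ring.
Qed.

End TimeFrequencyShifts.

Theorem theorem4p1 (R : realType) (f : R -> R[i]) (a c : R[i]) (b : R) :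
  cLebesgue_measurable f ->
  ((\forall x \ae (@lebesgue_measure R), b < x -> f x = c * expC (a * RtoC x)) \/
   (\forall x \ae (@lebesgue_measure R), x < b -> f x = c * expC (a * RtoC x))) ->
  ~ (\forall x \ae (@lebesgue_measure R), f x = c * expC (a * RtoC x)) ->
  gabor_lin_indep f.
Proof.
move=> _ [fe|fe] nfe; first exact: gabor_lin_indep_right fe nfe.
apply: gabor_lin_indep_reflect; apply: (gabor_lin_indep_right (a := - a) (c := c) (b := - b)).
- by apply: filterS (ae_reflect fe) => x fex bx; rewrite fex ?RtoCN ?mulrN ?mulNr // ltrNl.
- apply: contra_not nfe => /ae_reflect; apply: filterS => x.
  by rewrite opprK RtoCN mulrN mulNr opprK.
Qed.
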